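(* Let $f:\mathbb{R}^n\to\overline{\mathbb{R}}$ be a proper function that is ADC associated with a sequence $\{f^k=g^k-h^k\}$ (in any of the pointwise, epigraphical or continuous senses), and let $\bar x\notin\operatorname{dom} f$. If for every sequence $x^k\to\bar x$ one has $x^k\notin\operatorname{dom} f^k$ for all sufficiently large $k$, then $\partial_A f(\bar x)=\emptyset$. Moreover, this condition on sequences is satisfied whenever $\operatorname{dom} f$ is closed and $\operatorname{dom} f^k\subset\operatorname{dom} f$ for all sufficiently large $k$.
   Context: $\overline{\mathbb{R}}=\mathbb{R}\cup\{\pm\infty\}$. A proper function $f^k:\mathbb{R}^n\to\overline{\mathbb{R}}$ is DC on its domain if there are proper, lsc, convex $g^k,h^k:\mathbb{R}^n\to\overline{\mathbb{R}}$ with $\operatorname{dom} f^k=\operatorname{dom} g^k\cap\operatorname{dom} h^k$ and $f^k=g^k-h^k$ on $\operatorname{dom} f^k$; we write $f^k=g^k-h^k$ for such a decomposition. A proper $f$ is ADC associated with $\{f^k\}$ if the $f^k$ are proper, DC on their domains, and $f^k\to f$ pointwise (p-ADC), or epigraphically (e-ADC), or continuously (c-ADC: $f^k(x^k)\to f(x)$ whenever $x^k\to x$). For sets $C^k\subset\mathbb{R}^n$, $\operatorname{Lim\,sup}_k C^k=\{u:\exists$ infinite $N\subset\mathbb{N}$ and $u^k\in C^k$ with $u^k\to u$ along $N\}$. The approximate subdifferential (associated with $\{f^k=g^k-h^k\}$) is $\partial_A f(\bar x)=\bigcup_{x^k\to\bar x}\operatorname{Lim\,sup}_{k\to\infty}[\partial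 g^k(x^k)-\partial h^k(x^k)]$, where $\partial$ is the convex subdifferential (empty outside the domain), and Minkowski sums/differences with $\emptyset$ are $\emptyset$. *)

From HB Require Import structures.
From mathcomp Require Import all_boot all_order all_algebra.
From mathcomp Require Import all_classical all_reals all_analysis.
Set Implicit Arguments. Unset Strict Implicit. Unset Printing Implicit Defensive.
Import Order.TTheory GRing.Theory Num.Theory.
Import numFieldNormedType.Exports.
Local Open Scope classical_set_scope.
Local Open Scope ring_scope.

Section ADC.
Variables (R : realType) (n : nat).
Notation vec := 'rV[R]_n.

Definition dotv (u v : vec) : R := (u *m v^T) 0 0.

Local Open Scope ereal_scope.

Definition dom (f : vec -> \bar R) : set vec := [set x | f x < +oo].

Definition eproper (f : vec -> \bar R) : Prop :=
  (forall x, f x != -oo) /\ dom f !=set0.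

Definition econvex (f : vec -> \bar R) : Prop :=
  forall (x y : vec) (t : R), (0 < t < 1)%R ->
    f (t *: x + (1 - t) *: y)%R <= t%:E * f x + (1 - t)%:E * f y.

Definition plc_convex (f : vec -> \bar R) : Prop :=
  eproper f /\ lower_semicontinuous f /\ econvex f.

Definition DC_decomp (f g h : vec -> \bar R) : Prop :=
  plc_convex g /\ plc_convex h /\ dom f = dom g `&` dom h /\
  (forall x, dom f x -> f x = g x - h x).

(* convex subdifferential (empty outside the domain) *)
Definition csubdiff (g : vec -> \bar R) (x : vec) : set vec :=
  [set v | g x \is a fin_num /\ forall y, g x + (dotv v (y - x)%R)%:E <= g y].

Definition mdiff (A B : set vec) : set vec :=
  [set w | exists a b, A a /\ B b /\ w = (a - b)%R].

Definition pconv (fk : nat -> vec -> \bar R) (f : vec -> \bar R) : Prop :=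
  forall x, (fun k => fk k x) @ \oo --> f x.

Definition econv (fk : nat -> vec -> \bar R) (f : vec -> \bar R) : Prop :=
  forall x,
    (forall xk : nat -> vec, xk @ \oo --> x ->
        f x <= limn_einf (fun k => fk k (xk k))) /\
    (exists2 xk : nat -> vec, xk @ \oo --> x &
        limn_esup (fun k => fk k (xk k)) <= f x).

Definition cconv (fk : nat -> vec -> \bar R) (f : vec -> \bar R) : Prop :=
  forall x (xk : nat -> vec), xk @ \oo --> x ->
    (fun k => fk k (xk k)) @ \oo --> f x.

Definition ADC (f : vec -> \bar R) (fk gk hk : nat -> vec -> \bar R) : Prop :=
  (forall k, eproper (fk k)) /\ (forall k, DC_decomp (fk k) (gk k) (hk k)) /\
  (pconv fk f \/ econv fk f \/ cconv fk f).

Definition Limsup_set (C : nat -> set vec) : set vec :=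
  [set u | exists (N : set nat) (uk : nat -> vec),
     infinite_set N /\ (forall k, N k -> C k (uk k)) /\
     (forall e : R, (0 < e)%R -> \forall k \near \oo, N k -> (`|uk k - u| < e)%R)].

Definition approx_subdiff (gk hk : nat -> vec -> \bar R) (xbar : vec) : set vec :=
  [set v | exists2 xk : nat -> vec, xk @ \oo --> xbar &
     Limsup_set (fun k => mdiff (csubdiff (gk k) (xk k)) (csubdiff (hk k) (xk k))) v].

End ADC.

From HB Require Import structures.
From mathcomp Require Import all_boot all_order all_algebra.
From mathcomp Require Import all_classical all_reals all_analysis.
Import Order.TTheory GRing.Theory Num.Theory.
Import numFieldNormedType.Exports.
Local Open Scope classical_set_scope.
Local Open Scope ring_scope.

(* A difference of subgradients [a - b] with [a] in the subdifferential of [g^k]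
   and [b] in that of [h^k] at [x] forces [x] into [dom g^k] and [dom h^k], hence
   into [dom f^k].  If the [x^k] eventually leave [dom f^k], the sets whose outer
   limit defines the approximate subdifferential are eventually empty, so that
   outer limit is empty.  When [dom f] is closed, a sequence tending to a point
   outside it eventually stays outside it, hence outside every [dom f^k]
   contained in [dom f]. *)

Lemma eventually_notin_closed_subset (T : topologicalType) (D : set T)
    (Dk : nat -> set T) (x : T) (xk : nat -> T) :
  closed D -> ~ D x -> (\forall k \near \oo, Dk k `<=` D) -> xk @ \oo --> x ->
  \forall k \near \oo, ~ Dk k (xk k).
Proof.
move=> clD Dx DkD xkx.
have nbhsDC : nbhs x (~` D) by apply: open_nbhs_nbhs; split=> //; exact: closed_openC.
have xkDC : \forall k \near \oo, (~` D) (xk k) := xkx _ nbhsDC.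
by move: xkDC DkD; apply: filterS2 => k xkD DkD /DkD.
Qed.

Section ApproxSubdiffEmpty.
Variables (R : realType) (n : nat).
Notation vec := 'rV[R]_n.

Lemma csubdiff_dom {g : vec -> \bar R} {x v : vec} :
  csubdiff g x v -> dom g x.
Proof. by move=> [/fin_numPlt /andP[]]. Qed.

Lemma mdiff_csubdiff_dom {f g h : vec -> \bar R} {x w : vec} :
  DC_decomp f g h -> mdiff (csubdiff g x) (csubdiff h x) w -> dom f x.
Proof.
move=> [_ [_ [-> _]]] [a [b [/csubdiff_dom gx [/csubdiff_dom hx _]]]].
by split.
Qed.

Lemma Limsup_set_eventually_set0 (C : nat -> set vec) :
  (\forall k \near \oo, C k = set0) -> Limsup_set C = set0.
Proof.
move=> [M _ CM]; apply/seteqP; split=> // u [N [uk [Ninf [NC _]]]].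
apply: Ninf; apply: (sub_finite_set _ (finite_II M)) => k Nk /=.
rewrite ltnNge; apply/negP => Mk.
by rewrite -[False]/(set0 (uk k)) -(CM k Mk); exact: NC.
Qed.

Lemma approx_subdiff_eq0 (fk gk hk : nat -> vec -> \bar R) (xbar : vec) :
  (forall k, DC_decomp (fk k) (gk k) (hk k)) ->
  (forall xk : nat -> vec, xk @ \oo --> xbar ->
     \forall k \near \oo, ~ dom (fk k) (xk k)) ->
  approx_subdiff gk hk xbar = set0.
Proof.
move=> DCk leave_dom; apply/seteqP; split=> // v [xk xkx].
rewrite Limsup_set_eventually_set0 //.
apply: filterS (leave_dom xk xkx) => k xk_dom.
by apply/seteqP; split=> // w /(mdiff_csubdiff_dom (DCk k)).
Qed.

End ApproxSubdiffEmpty.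

Theorem proposition2p4 (R : realType) (n : nat)
    (f : 'rV[R]_n -> \bar R) (fk gk hk : nat -> 'rV[R]_n -> \bar R)
    (xbar : 'rV[R]_n) :
  eproper f -> ADC f fk gk hk -> ~ dom f xbar ->
  ((forall xk : nat -> 'rV[R]_n, xk @ \oo --> xbar ->
      \forall k \near \oo, ~ dom (fk k) (xk k)) ->
     approx_subdiff gk hk xbar = set0) /\
  (closed (dom f) -> (\forall k \near \oo, dom (fk k) `<=` dom f) ->
     forall xk : nat -> 'rV[R]_n, xk @ \oo --> xbar ->
       \forall k \near \oo, ~ dom (fk k) (xk k)).
Proof.
move=> _ [_ [DCk _]] xbar_dom; split; first exact: approx_subdiff_eq0.
move=> clD DkD xk.
exact: (@eventually_notin_closed_subset _ _ (fun k => dom (fk k)) _ xk clD xbar_dom DkD).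
Qed.
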